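(* Let $G$ be a dicotic nonzugzwang scoring game all of whose terminal positions are numbers, and let $t\geq 0$. Then $0\leq Ls(G)-Ls(G_t)\leq t$ and $0\geq Rs(G)-Rs(G_t)\geq -t$.
   Context: A scoring game is $G=\langle G^L\mid G^R\rangle$ with $G^L,G^R$ finite nonempty sets of scoring games or empty sets decorated with a real, $\emptyset^s$; $\langle\emptyset^s\mid\emptyset^s\rangle$ is the number $s$. $Ls(\langle\emptyset^s\mid G^R\rangle)=s$, $Rs(\langle G^L\mid\emptyset^s\rangle)=s$, otherwise $Ls(G)=\max_{G^l\in G^L}Rs(G^l)$, $Rs(G)=\min_{G^r\in G^R}Ls(G^r)$. Dicotic: at every position both players have options or neither; nonzugzwang: $Ls(H)\ge Rs(H)$ at every position $H$. For a game $H$ and real $c$, $H+c$ is $H$ with $c$ added to every terminal score. Cooling: if $G$ is a number $k$, $G_t=k$ for all $t\ge 0$ and its temperature is $0$. Otherwise let $\widetilde G_t=\langle \{G^l_t-t: G^l\in G^L\}\mid \{G^r_t+t: G^r\in G^R\}\rangle$, let $t_0=\min\{t\geq 0: Ls(\widetilde G_t)=Rs(\widetilde G_t)\}$ (this minimum exists for dicotic nonzugzwang games), and set $G_t=\widetilde G_t$ for $t\le t_0$ and $G_t$ equal to the number $Ls(\widetilde G_{t_0})$ for $t>t_0$. The number $t_0$ is the temperature $\sigma(G)$. *)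

From HB Require Import structures.
From mathcomp Require Import all_boot all_order all_algebra.
From mathcomp Require Import classical_sets reals.
From Stdlib Require List.
Set Implicit Arguments. Unset Strict Implicit. Unset Printing Implicit Defensive.
Import Order.TTheory GRing.Theory Num.Theory.
Local Open Scope ring_scope.
Local Open Scope classical_set_scope.

(* A scoring game  <G^L | G^R>.  [Game sl L sr Rr] has left options [L] and
   right options [Rr]; when [L = [::]] the left side is the decorated empty
   set  ∅^sl  (similarly for the right side with sr).  The score decorating a
   nonempty side is irrelevant (ignored by every definition below). *)
Inductive game (R : Type) : Type :=
  Game of R & seq (game R) & R & seq (game R).

Section Games.
Variable R : realType.

Definition Num (s : R) : game R := Game s [::] s [::].

Fixpoint LRs (g : game R) : R * R :=
  match g with
  | Game sl L sr Rr =>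
    (match L with
     | [::] => sl
     | l0 :: L' => foldr Order.max (LRs l0).2 (map (fun h => (LRs h).2) L')
     end,
     match Rr with
     | [::] => sr
     | r0 :: R' => foldr Order.min (LRs r0).1 (map (fun h => (LRs h).1) R')
     end)
  end.

Definition Ls (g : game R) : R := (LRs g).1.
Definition Rs (g : game R) : R := (LRs g).2.

Fixpoint shift (g : game R) (c : R) : game R :=
  match g with
  | Game sl L sr Rr =>
      Game (sl + c) (map (fun h => shift h c) L) (sr + c) (map (fun h => shift h c) Rr)
  end.

Fixpoint positions (g : game R) : seq (game R) :=
  match g with
  | Game _ L _ Rr =>
      g :: (flatten (map positions L) ++ flatten (map positions Rr))
  end.

Definition options_left (g : game R) : seq (game R) :=
  let: Game _ L _ _ := g in L.
Definition options_right (g : game R) : seq (game R) :=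
  let: Game _ _ _ Rr := g in Rr.

Definition dicotic (G : game R) : Prop :=
  forall H, List.In H (positions G) ->
    (options_left H = [::] <-> options_right H = [::]).

Definition nonzugzwang (G : game R) : Prop :=
  forall H, List.In H (positions G) -> Rs H <= Ls H.

Definition terminal_numbers (G : game R) : Prop :=
  forall H, List.In H (positions G) ->
    options_left H = [::] -> options_right H = [::] ->
    exists s, H = Num s.

(* If G is a number it is unchanged; otherwise
   tilde G_u = < G^l_u - u | G^r_u + u >,
   t0 = min { u >= 0 : Ls(tilde G_u) = Rs(tilde G_u) } (taken as the infimum,
   which is that minimum whenever it exists), and
   G_t = tilde G_t for t <= t0, and the number Ls(tilde G_t0) for t > t0. *)
Fixpoint cool (g : game R) (t : R) {struct g} : game R :=
  match g with
  | Game sl L sr Rr =>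
    if [&& nilp L, nilp Rr & sl == sr] then g else
    let tl := fun u : R =>
      Game sl (map (fun h => shift (cool h u) (- u)) L)
           sr (map (fun h => shift (cool h u) u) Rr) in
    let t0 := inf [set u : R | 0 <= u /\ Ls (tl u) = Rs (tl u)] in
    if t <= t0 then tl t else Num (Ls (tl t0))
  end.

Definition temperature (g : game R) : R :=
  match g with
  | Game sl L sr Rr =>
    if [&& nilp L, nilp Rr & sl == sr] then 0 else
    let tl := fun u : R =>
      Game sl (map (fun h => shift (cool h u) (- u)) L)
           sr (map (fun h => shift (cool h u) u) Rr) in
    inf [set u : R | 0 <= u /\ Ls (tl u) = Rs (tl u)]
  end.

End Games.

From Pilot Require Import Defs.
From HB Require Import structures.
From mathcomp Require Import all_boot all_order all_algebra.
From mathcomp Require Import classical_sets reals lra.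
Set Implicit Arguments. Unset Strict Implicit. Unset Printing Implicit Defensive.
Import Order.TTheory GRing.Theory Num.Theory.
Local Open Scope ring_scope.

(* By induction on G: u |-> Ls(G_u) is nonincreasing and 1-Lipschitz on
   [0, +oo), u |-> Rs(G_u) is nondecreasing and 1-Lipschitz, and
   Rs(G_u) <= Ls(G_u).  For a non-number G, Ls(tilde G_u) = max_l Rs(G^l_u) - u
   and Rs(tilde G_u) = min_r Ls(G^r_u) + u inherit the Lipschitz monotonicity
   from the options, and the last invariant bounds max_l Rs(G^l_u) above and
   min_r Ls(G^r_u) below, so the two scores of tilde G_u do meet.  Their
   difference is nonincreasing and continuous, hence the infimum t0 of the
   meeting times is a meeting time; G_u follows tilde G_u up to t0 and is frozen
   afterwards, which preserves all three properties.  The theorem is the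
   comparison of u = 0 with u = t. *)

Section SlowMonotonicity.
Variable R : realDomainType.

Definition slowly_decreasing (f : R -> R) : Prop :=
  forall u v, 0 <= u -> u <= v -> f v <= f u /\ f u <= f v + (v - u).

Definition slowly_increasing (f : R -> R) : Prop :=
  slowly_decreasing (fun u => - f u).

Lemma slowly_decreasing_min (f : R -> R) s :
  0 <= s -> slowly_decreasing f -> slowly_decreasing (fun u => f (Num.min u s)).
Proof.
move=> s_ge0 f_decr u v u_ge0 uv.
have [us|su] := leP u s; have [vs|sv] := leP v s.
- exact: f_decr.
- by have := f_decr u s u_ge0 us; lra.
- lra.
- lra.
Qed.

Lemma slowly_increasing_min (f : R -> R) s :
  0 <= s -> slowly_increasing f -> slowly_increasing (fun u => f (Num.min u s)).
Proof. exact: (@slowly_decreasing_min (fun u => - f u)). Qed.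

End SlowMonotonicity.

Section FoldMonotone.
Variables (R : realDomainType) (T : Type) (op : R -> R -> R).
Hypothesis op_mono : forall x y x' y', x <= x' -> y <= y' -> op x y <= op x' y'.
Hypothesis addr_opl : left_distributive +%R op.

Lemma foldr_addr (F : T -> R) c x0 s :
  foldr op (F x0 + c) (map (fun x => F x + c) s) = foldr op (F x0) (map F s) + c.
Proof. by elim: s => //= x s ->; rewrite addr_opl. Qed.

Lemma foldr_le_addr (F G : T -> R) c x0 s :
  (forall x, List.In x (x0 :: s) -> F x <= G x + c) ->
  foldr op (F x0) (map F s) <= foldr op (G x0) (map G s) + c.
Proof.
elim: s => [|x s IHs] FG /=; first by apply: FG; left.
rewrite addr_opl; apply: op_mono; first by apply: FG; right; left.
by apply: IHs => y [<-|ys]; apply: FG; [left | right; right].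
Qed.

Lemma foldr_slowly_decreasing (F : T -> R -> R) x0 s :
  (forall x, List.In x (x0 :: s) -> slowly_decreasing (F x)) ->
  slowly_decreasing (fun u => foldr op (F x0 u) (map (F^~ u) s)).
Proof.
move=> F_decr u v u_ge0 uv; split.
- rewrite -[leRHS]addr0; apply: foldr_le_addr => x /F_decr/(_ u v u_ge0 uv).
  by rewrite addr0 => -[].
- by apply: foldr_le_addr => x /F_decr/(_ u v u_ge0 uv) [].
Qed.

Lemma foldr_slowly_increasing (F : T -> R -> R) x0 s :
  (forall x, List.In x (x0 :: s) -> slowly_increasing (F x)) ->
  slowly_increasing (fun u => foldr op (F x0 u) (map (F^~ u) s)).
Proof.
move=> F_incr u v u_ge0 uv.
have le_uv : foldr op (F x0 u) (map (F^~ u) s) <= foldr op (F x0 v) (map (F^~ v) s) + 0.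
  by apply: foldr_le_addr => x /F_incr/(_ u v u_ge0 uv); lra.
have le_vu : foldr op (F x0 v) (map (F^~ v) s) <= foldr op (F x0 u) (map (F^~ u) s) + (v - u).
  by apply: foldr_le_addr => x /F_incr/(_ u v u_ge0 uv); lra.
lra.
Qed.

End FoldMonotone.

Section FirstMeet.
Variable R : realType.
Local Open Scope classical_set_scope.

Definition first_meet (a b : R -> R) : R := inf [set u | 0 <= u /\ a u = b u].

Lemma first_meetP (a b : R -> R) :
  slowly_decreasing a -> slowly_increasing b -> b 0 <= a 0 ->
  (exists2 u, 0 <= u & a u <= b u) ->
  0 <= first_meet a b /\ a (first_meet a b) = b (first_meet a b).
Proof.
move=> a_decr b_incr ab0 [u1 u1_ge0 ab_u1].
pose d u := a u - b u.
have d_gap u v : 0 <= u -> u <= v -> d v <= d u /\ d u <= d v + 2 * (v - u).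
  by move=> u_ge0 uv; have := a_decr u v u_ge0 uv; have := b_incr u v u_ge0 uv; rewrite /d; lra.
have d0_ge0 : 0 <= d 0 by rewrite subr_ge0.
pose W := [set u | 0 <= u /\ d u <= 0].
have W_lb : lbound W 0 by move=> y [].
have W_inf : has_inf W by split; [exists u1; rewrite /W /d /=; split => //; lra | exists 0].
pose s := inf W.
have s_ge0 : 0 <= s by apply: lb_le_inf W_inf.1 W_lb.
have s_le : lbound W s := ge_inf W_inf.2.
have ds_le0 : d s <= 0.
  rewrite leNgt; apply/negP => ds_gt0.
  have half_pos : 0 < d s / 2 by lra.
  have [e We es] := inf_adherent half_pos W_inf.
  have [_ de] := We; have := d_gap s e s_ge0 (s_le e We); rewrite -/s in es; lra.
have ds_ge0 : 0 <= d s.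
  rewrite leNgt; apply/negP => ds_lt0.
  have [w_ge0|w_lt0] := leP 0 (s + d s / 2).
  - have Ww : W (s + d s / 2).
      by split => //; have := d_gap _ s w_ge0 ltac:(lra); lra.
    by have := s_le _ Ww; lra.
  - by have := d_gap 0 s (lexx 0) s_ge0; lra.
have ab_s : a s = b s by rewrite /d in ds_le0 ds_ge0; lra.
suff -> : first_meet a b = s by [].
apply/le_anti/andP; split.
- by apply: ge_inf; [exists 0 => y [] | ].
- apply: lb_le_inf; first by exists s.
  by move=> y [y_ge0 aby]; apply: s_le; split; rewrite /d ?aby ?subrr.
Qed.

End FirstMeet.

Section Games.
Variable R : realType.
Implicit Types (g h : game R) (L Rr : seq (game R)).

Fixpoint game_In_ind (P : game R -> Prop)
  (IH : forall sl L sr Rr, (forall h, List.In h L -> P h) ->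
          (forall h, List.In h Rr -> P h) -> P (Game sl L sr Rr)) g : P g :=
  match g with
  | Game sl L sr Rr =>
    let fix in_list (s : seq (game R)) : forall h, List.In h s -> P h :=
      match s with
      | [::] => fun h (hin : List.In h [::]) => False_ind _ hin
      | x :: s' => fun h hin => match hin with
                   | or_introl e => eq_ind x P (game_In_ind IH x) h e
                   | or_intror i => in_list s' h i end
      end in
    IH sl L sr Rr (in_list L) (in_list Rr)
  end.

Lemma positions_flatten h x L :
  List.In h L -> List.In x (positions h) -> List.In x (flatten (map (@positions R) L)).
Proof.
by elim: L => [|y L IHL] //= [<-|hL] xh; apply/List.in_app_iff; [left | right; apply: IHL].
Qed.

Definition admissible g : Prop := [/\ dicotic g, nonzugzwang g & terminal_numbers g].

Lemma admissible_option sl L sr Rr h :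
  admissible (Game sl L sr Rr) -> List.In h L \/ List.In h Rr -> admissible h.
Proof.
move=> [dic nz term] hg.
have sub x : List.In x (positions h) -> List.In x (positions (Game sl L sr Rr)).
  move=> xh; right; apply/List.in_app_iff.
  by case: hg => hin; [left | right]; apply: positions_flatten hin xh.
by split=> x /sub; [apply: dic | apply: nz | apply: term].
Qed.

Lemma LRs_shift g c : Ls (shift g c) = Ls g + c /\ Rs (shift g c) = Rs g + c.
Proof.
elim/game_In_ind: g => sl L sr Rr IHL IHR; rewrite /Ls /Rs /=; split.
- case: L IHL => [|l0 L] IH //=.
  rewrite -!map_comp -(foldr_addr (@addr_maxl _)); congr foldr.
    by case: (IH l0 (or_introl erefl)).
  by apply: List.map_ext_in => h hL; case: (IH h (or_intror hL)).
- case: Rr IHR => [|r0 Rr] IH //=.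
  rewrite -!map_comp -(foldr_addr (@addr_minl _)); congr foldr.
    by case: (IH r0 (or_introl erefl)).
  by apply: List.map_ext_in => h hRr; case: (IH h (or_intror hRr)).
Qed.

Definition tilde_cool g (u : R) : game R :=
  let: Game sl L sr Rr := g in
  Game sl (map (fun h => shift (cool h u) (- u)) L) sr (map (fun h => shift (cool h u) u) Rr).

Lemma cool_Game sl l0 L sr Rr u :
  let g := Game sl (l0 :: L) sr Rr in
  let t0 := first_meet (fun v => Ls (tilde_cool g v)) (fun v => Rs (tilde_cool g v)) in
  cool g u = if u <= t0 then tilde_cool g u else Defs.Num (Ls (tilde_cool g t0)).
Proof. by []. Qed.

Lemma Ls_tilde_cool sl l0 L sr Rr u :
  Ls (tilde_cool (Game sl (l0 :: L) sr Rr) u) =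
  foldr Num.max (Rs (cool l0 u) - u) (map (fun h => Rs (cool h u) - u) L).
Proof.
rewrite /Ls /= -map_comp; congr foldr; first exact: (LRs_shift _ _).2.
by apply: eq_map => h /=; exact: (LRs_shift _ _).2.
Qed.

Lemma Rs_tilde_cool sl L sr r0 Rr u :
  Rs (tilde_cool (Game sl L sr (r0 :: Rr)) u) =
  foldr Num.min (Ls (cool r0 u) + u) (map (fun h => Ls (cool h u) + u) Rr).
Proof.
rewrite /Rs /= -map_comp; congr foldr; first exact: (LRs_shift _ _).1.
by apply: eq_map => h /=; exact: (LRs_shift _ _).1.
Qed.

Definition cooling_regular g : Prop :=
  [/\ Ls (cool g 0) = Ls g, Rs (cool g 0) = Rs g,
      slowly_decreasing (fun u => Ls (cool g u)),
      slowly_increasing (fun u => Rs (cool g u)) &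
      forall u, 0 <= u -> Rs (cool g u) <= Ls (cool g u)].

Lemma cooling_regular_Num s : cooling_regular (Defs.Num s).
Proof.
have cool_Num u : cool (Defs.Num s) u = Defs.Num s by rewrite /= eqxx.
by split=> [||u v _ uv|u v _ uv|u _]; rewrite ?cool_Num //=; lra.
Qed.

Section CoolingOptions.
Variables (sl sr : R) (l0 r0 : game R) (L Rr : seq (game R)).
Local Notation g := (Game sl (l0 :: L) sr (r0 :: Rr)).
Hypothesis regL : forall h, List.In h (l0 :: L) -> cooling_regular h.
Hypothesis regR : forall h, List.In h (r0 :: Rr) -> cooling_regular h.

Lemma Ls_tilde_cool_decreasing : slowly_decreasing (fun u => Ls (tilde_cool g u)).
Proof.
move=> u v u_ge0 uv; rewrite !Ls_tilde_cool; move: u v u_ge0 uv.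
apply: (foldr_slowly_decreasing le_max2 (@addr_maxl _) (F := fun h u => Rs (cool h u) - u)).
move=> h /regL [_ _ _ h_incr _] u v u_ge0 uv.
by have := h_incr u v u_ge0 uv; lra.
Qed.

Lemma Rs_tilde_cool_increasing : slowly_increasing (fun u => Rs (tilde_cool g u)).
Proof.
move=> u v u_ge0 uv; rewrite !Rs_tilde_cool; move: u v u_ge0 uv.
apply: (foldr_slowly_increasing le_min2 (@addr_minl _) (F := fun h u => Ls (cool h u) + u)).
move=> h /regR [_ _ h_decr _ _] u v u_ge0 uv.
by have := h_decr u v u_ge0 uv; lra.
Qed.

Lemma Ls_tilde_cool0 : Ls (tilde_cool g 0) = Ls g.
Proof.
rewrite Ls_tilde_cool /Ls /=; congr foldr.
  by have [_ Rs0 _ _ _] := regL (or_introl erefl); rewrite subr0.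
apply: List.map_ext_in => h hL.
by have [_ Rs0 _ _ _] := regL (or_intror hL); rewrite subr0.
Qed.

Lemma Rs_tilde_cool0 : Rs (tilde_cool g 0) = Rs g.
Proof.
rewrite Rs_tilde_cool /Rs /=; congr foldr.
  by have [Ls0 _ _ _ _] := regR (or_introl erefl); rewrite addr0.
apply: List.map_ext_in => h hRr.
by have [Ls0 _ _ _ _] := regR (or_intror hRr); rewrite addr0.
Qed.

Lemma tilde_cool_crossing :
  exists2 u, 0 <= u & Ls (tilde_cool g u) <= Rs (tilde_cool g u).
Proof.
pose A := foldr Num.max (Ls l0) (map (@Ls R) L).
pose B := foldr Num.min (Rs r0) (map (@Rs R) Rr).
have Ls_le u : 0 <= u -> Ls (tilde_cool g u) <= A + - u.
  move=> u_ge0; rewrite Ls_tilde_cool /A.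
  apply: (foldr_le_addr le_max2 (@addr_maxl _) (G := @Ls R)) => h /regL.
  by move=> [Ls0 _ h_decr _ h_nz]; have := h_decr 0 u (lexx 0) u_ge0; have := h_nz u u_ge0; lra.
have Rs_ge u : 0 <= u -> B <= Rs (tilde_cool g u) + - u.
  move=> u_ge0; rewrite Rs_tilde_cool /B.
  apply: (foldr_le_addr le_min2 (@addr_minl _) (F := @Rs R)) => h /regR.
  by move=> [_ Rs0 _ h_incr h_nz]; have := h_incr 0 u (lexx 0) u_ge0; have := h_nz u u_ge0; lra.
have AB_le : A - B <= Num.max 0 (A - B) by rewrite le_max lexx orbT.
have u_ge0 : 0 <= Num.max 0 (A - B) by rewrite le_max lexx.
by exists (Num.max 0 (A - B)) => //; have := Ls_le _ u_ge0; have := Rs_ge _ u_ge0; lra.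
Qed.

Lemma cooling_regular_Game : Rs g <= Ls g -> cooling_regular g.
Proof.
move=> g_nz.
have tilde_nz0 : Rs (tilde_cool g 0) <= Ls (tilde_cool g 0).
  by rewrite Ls_tilde_cool0 Rs_tilde_cool0.
have [s_ge0 meet] := first_meetP Ls_tilde_cool_decreasing Rs_tilde_cool_increasing
  tilde_nz0 tilde_cool_crossing.
set s := first_meet _ _ in s_ge0 meet.
have cool_LRs u : Ls (cool g u) = Ls (tilde_cool g (Num.min u s)) /\
                  Rs (cool g u) = Rs (tilde_cool g (Num.min u s)).
  by rewrite cool_Game -/s; case: leP.
have before_meet w : 0 <= w -> w <= s -> Rs (tilde_cool g w) <= Ls (tilde_cool g w).
  move=> w_ge0 ws; have := Ls_tilde_cool_decreasing w_ge0 ws.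
  by have := Rs_tilde_cool_increasing w_ge0 ws; lra.
split.
- by rewrite (cool_LRs 0).1 (min_idPl s_ge0) Ls_tilde_cool0.
- by rewrite (cool_LRs 0).2 (min_idPl s_ge0) Rs_tilde_cool0.
- move=> u v u_ge0 uv; rewrite !(cool_LRs _).1; move: u v u_ge0 uv.
  exact: slowly_decreasing_min s_ge0 Ls_tilde_cool_decreasing.
- move=> u v u_ge0 uv; rewrite !(cool_LRs _).2; move: u v u_ge0 uv.
  exact: slowly_increasing_min s_ge0 Rs_tilde_cool_increasing.
- move=> u u_ge0; rewrite (cool_LRs u).1 (cool_LRs u).2.
  by apply: before_meet; [rewrite le_min u_ge0 | rewrite ge_min lexx orbT].
Qed.

End CoolingOptions.

Lemma admissible_cooling_regular g : admissible g -> cooling_regular g.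
Proof.
elim/game_In_ind: g => sl L sr Rr IHL IHR g_adm.
have reg_opt h : List.In h L \/ List.In h Rr -> cooling_regular h.
  by move=> hg; case: hg (admissible_option g_adm hg) => hin; [apply: IHL | apply: IHR].
have [dic nz term] := g_adm.
have g_pos : List.In (Game sl L sr Rr) (positions (Game sl L sr Rr)) by left.
move: (dic _ g_pos) (nz _ g_pos) (term _ g_pos) reg_opt => /=.
case: L {IHL g_adm dic nz term g_pos} => [|l0 L]; case: Rr {IHR} => [|r0 Rr] //=.
- by move=> _ _ /(_ erefl erefl) [s [-> ->]] _; apply: cooling_regular_Num.
- by move=> [/(_ erefl)].
- by move=> [_ /(_ erefl)].
- move=> _ nz_g _ reg_opt; apply: cooling_regular_Game nz_g => h hin;
    apply: reg_opt; [left | right]; exact: hin.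
Qed.

End Games.

Theorem mainTheorem2 (R : realType) (G : game R) (t : R) :
  dicotic G -> nonzugzwang G -> terminal_numbers G -> 0 <= t ->
  (0 <= Ls G - Ls (cool G t) <= t) /\ (- t <= Rs G - Rs (cool G t) <= 0).
Proof.
move=> dic nz term t_ge0.
have [Ls0 Rs0 G_decr G_incr _] := admissible_cooling_regular (And3 dic nz term).
have := G_decr 0 t (lexx 0) t_ge0; have := G_incr 0 t (lexx 0) t_ge0.
rewrite Ls0 Rs0 subr0 => -[? ?] [? ?].
by split; apply/andP; split; lra.
Qed.
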